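(* Let $\mathcal{K}=\mathcal{C}_\circ\setminus \mathcal{C}_\circ\mathcal{A}^+$. Then $\mathcal{K}$ is a prefix code and $\mathcal{K}^*=\mathcal{C}^*$. Moreover, every word of $\mathcal{C}^*$ admits a unique factorization $\kappa_{1}\kappa_{2}\cdots\kappa_{j}$ with $j\ge 0$ and all $\kappa_i\in\mathcal{K}$; that is, $\mathcal{K}$ generates $\mathcal{C}^*$ unambiguously.
   Context: Let $\mathcal{A}$ be a finite alphabet and $w\in\mathcal{A}^*$ a fixed word of length $\ell=|w|\ge 2$. The autocorrelation set of $w$ is $\mathcal{C}=\{\epsilon\}\cup\{e\in\mathcal{A}^+ : |e|<\ell \text{ and there exists } e'\in\mathcal{A}^+ \text{ with } we=e'w\}$, and $\mathcal{C}_\circ=\mathcal{C}\setminus\{\epsilon\}$. For languages $L_1,L_2$, $L_1L_2$ denotes concatenation and $L^*$ the Kleene star. Thus $\mathcal{K}=\mathcal{C}_\circ\setminus \mathcal{C}_\circ\mathcal{A}^+$ is the set of words of $\mathcal{C}_\circ$ that have no proper prefix lying in $\mathcal{C}_\circ$. *)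

From mathcomp Require Import all_boot.
Set Implicit Arguments. Unset Strict Implicit. Unset Printing Implicit Defensive.

Definition lang (A : finType) := seq A -> Prop.

Definition autocorr (A : finType) (w : seq A) : lang A :=
  fun e => e = [::] \/
    (0 < size e /\ size e < size w /\
     exists e' : seq A, 0 < size e' /\ w ++ e = e' ++ w).

Definition autocorr0 (A : finType) (w : seq A) : lang A :=
  fun e => autocorr w e /\ e <> [::].

Definition concat_plus (A : finType) (L : lang A) : lang A :=
  fun x => exists u v : seq A, L u /\ 0 < size v /\ x = u ++ v.

Definition Kset (A : finType) (w : seq A) : lang A :=
  fun e => autocorr0 w e /\ ~ concat_plus (autocorr0 w) e.

Definition star (A : finType) (L : lang A) : lang A :=
  fun x => exists ls : seq (seq A), (forall u, u \in ls -> L u) /\ flatten ls = x.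

Definition prefix_code (A : finType) (L : lang A) : Prop :=
  forall u v s : seq A, L u -> L v -> u ++ s = v -> s = [::].

From mathcomp Require Import all_boot.
From mathcomp Require Import zify.
From Stdlib Require Import Classical.
Set Implicit Arguments. Unset Strict Implicit. Unset Printing Implicit Defensive.

(* For any language L, the set [minimal L] = L \ L A^+ of words
   of L having no proper prefix in L is a prefix code, and a prefix code of
   nonempty words factors every concatenation uniquely (peel off the first
   factor).  If moreover L is closed under right cancellation (u, u v in L
   with v nonempty imply v in L) and avoids the empty word, then every word
   of L is a product of words of [minimal L]: either it is minimal, or it
   splits as u v with u, v in L both shorter.  The nonempty autocorrelation
   set C_o of w is exactly the set of periods e of w (0 < |e| < |w| and
   w = w' e with w' the suffix of w of length |w| - |e|), and from this
   description right cancellation follows.  Since K = minimal C_o and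
   C = {epsilon} u C_o, we get K^* = C^* with unique factorizations. *)

Lemma star_nil (A : finType) (L : lang A) : star L [::].
Proof. by exists [::]. Qed.

Lemma star_one (A : finType) (L : lang A) x : L x -> star L x.
Proof.
by move=> Lx; exists [:: x]; split=> [u|]; [rewrite inE => /eqP ->|rewrite /= cats0].
Qed.

Lemma star_cat (A : finType) (L : lang A) x y :
  star L x -> star L y -> star L (x ++ y).
Proof.
move=> [l1 [L1 <-]] [l2 [L2 <-]]; exists (l1 ++ l2); split; last by rewrite flatten_cat.
by move=> u; rewrite mem_cat => /orP[]; [apply: L1 | apply: L2].
Qed.

Lemma star_mono (A : finType) (L L' : lang A) x :
  (forall u, L u -> L' u) -> star L x -> star L' x.
Proof. by move=> LL' [ls [Lls <-]]; exists ls; split=> // u /Lls /LL'. Qed.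

Lemma star_flatten (A : finType) (L : lang A) (ls : seq (seq A)) :
  (forall u, u \in ls -> star L u) -> star L (flatten ls).
Proof.
elim: ls => [|u ls IH] Lls /=; first exact: star_nil.
apply: star_cat; first by apply: Lls; rewrite mem_head.
by apply: IH => v vls; apply: Lls; rewrite inE vls orbT.
Qed.

Definition minimal (A : finType) (L : lang A) : lang A :=
  fun e => L e /\ ~ concat_plus L e.

Lemma minimal_prefix_code (A : finType) (L : lang A) : prefix_code (minimal L).
Proof.
move=> u v [|a s] [Lu _] [_ not_split] uv //; exfalso.
by apply: not_split; exists u, (a :: s).
Qed.

Lemma prefix_code_cancel (A : finType) (L : lang A) k k' r r' :
  prefix_code L -> L k -> L k' -> k ++ r = k' ++ r' -> k = k' /\ r = r'.
Proof.
move=> pcL Lk Lk' eq_kr.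
suff eq_k : k = k'.
  by split=> //; have := congr1 (drop (size k)) eq_kr; rewrite eq_k !drop_size_cat.
wlog le_kk' : k k' r r' Lk Lk' eq_kr / size k <= size k'.
  move=> sym; have [le|/ltnW le] := leqP (size k) (size k').
    exact: sym Lk Lk' eq_kr le.
  by symmetry; apply: sym Lk' Lk (esym eq_kr) le.
have pre_k : take (size k) k' = k by rewrite -(takel_cat r' le_kk') -eq_kr take_size_cat.
have := pcL k k' (drop (size k) k') Lk Lk'; rewrite -{1}pre_k cat_take_drop => /(_ erefl).
by move=> rest0; rewrite -pre_k -{2}(cat_take_drop (size k) k') rest0 cats0.
Qed.

Lemma prefix_code_unique_factorization (A : finType) (L : lang A) (ks ks' : seq (seq A)) :
  prefix_code L -> ~ L [::] ->
  (forall k, k \in ks -> L k) -> (forall k, k \in ks' -> L k) ->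
  flatten ks = flatten ks' -> ks = ks'.
Proof.
move=> pcL Lnil; elim: ks ks' => [|k ks IH] [|k' ks'] //= Lks Lks' eq_flat.
- by move: eq_flat (Lks' k' (mem_head _ _)); case: k' {Lks'}.
- by move: eq_flat (Lks k (mem_head _ _)); case: k {Lks IH}.
- have [-> eq_rest] := prefix_code_cancel pcL (Lks k (mem_head _ _))
                                               (Lks' k' (mem_head _ _)) eq_flat.
  congr (_ :: _); apply: IH eq_rest => u u_in.
    by apply: Lks; rewrite inE u_in orbT.
  by apply: Lks'; rewrite inE u_in orbT.
Qed.

Lemma minimal_star (A : finType) (L : lang A) :
  ~ L [::] ->
  (forall u v, L (u ++ v) -> L u -> 0 < size v -> L v) ->
  forall c, L c -> star (minimal L) c.
Proof.
move=> Lnil Lcancel c; have [n] := ubnP (size c); elim: n c => [|n IH] c; first by rewrite ltn0.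
move=> lt_cn Lc.
have [[u [v [Lu [v_gt0 eq_c]]]]|not_split] := classic (concat_plus L c); last first.
  exact: star_one (conj Lc not_split).
have u_gt0 : 0 < size u by move: Lu; case: u {eq_c} => // /Lnil.
move: lt_cn Lc; rewrite eq_c => lt_cn Luv.
rewrite size_cat in lt_cn; apply: star_cat; apply: IH.
- lia.
- exact: Lu.
- lia.
- exact: Lcancel Luv Lu v_gt0.
Qed.

Lemma autocorr0P (A : finType) (w e : seq A) :
  autocorr0 w e <-> [/\ 0 < size e, size e < size w & drop (size e) w ++ e = w].
Proof.
split.
- move=> [[->|[e_gt0 [lt_ew [e' [_ eq_w]]]]] e_nil] //; split=> //.
  have size_e' : size e' = size e.
    by have := congr1 size eq_w; rewrite !size_cat; lia.
  have := congr1 (drop (size e)) eq_w.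
  by rewrite drop_cat lt_ew -{2}size_e' drop_size_cat.
- move=> [e_gt0 lt_ew eq_w]; split; last by case: e e_gt0 {lt_ew eq_w}.
  right; split=> //; split=> //; exists (take (size e) w); split.
    by rewrite size_take lt_ew.
  by rewrite -{3}eq_w catA cat_take_drop.
Qed.

Lemma autocorr0_nonempty (A : finType) (w : seq A) : ~ autocorr0 w [::].
Proof. by case. Qed.

Lemma autocorr0_cancel (A : finType) (w u v : seq A) :
  autocorr0 w (u ++ v) -> autocorr0 w u -> 0 < size v -> autocorr0 w v.
Proof.
move=> /autocorr0P [_ lt_uvw eq_uv] /autocorr0P [_ lt_uw eq_u] v_gt0; apply/autocorr0P.
have size_uv : size (u ++ v) = size u + size v by rewrite size_cat.
split=> //; first by rewrite size_uv in lt_uvw; lia.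
(* The suffix of w of length |w| - |v| is that of length |w| - |u v|, then u. *)
have drop_v : drop (size v) w = drop (size (u ++ v)) w ++ u.
  have lt_v_drop : size v < size (drop (size u) w) by rewrite size_drop; lia.
  by rewrite -{1}eq_u drop_cat lt_v_drop drop_drop size_uv addnC.
by rewrite drop_v -catA.
Qed.

(* K^* = C^*, since K lies in C and every element of C lies in K^*. *)
Lemma star_Kset_autocorr (A : finType) (w x : seq A) :
  star (Kset w) x <-> star (autocorr w) x.
Proof.
split; first by apply: star_mono => e [[Ce _] _].
move=> [ls [Cls <-]]; apply: star_flatten => e /Cls [->|Ce]; first exact: star_nil.
apply: (minimal_star (@autocorr0_nonempty _ w) (@autocorr0_cancel _ w)).
by split; [right | case: e Ce => [[]|]].
Qed.

Theorem mainTheorem1 (A : finType) (w : seq A) (hw : 2 <= size w) :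
  prefix_code (Kset w) /\
  (forall x : seq A, star (Kset w) x <-> star (autocorr w) x) /\
  (forall x : seq A, star (autocorr w) x ->
     exists ks : seq (seq A),
       (forall k, k \in ks -> Kset w k) /\ flatten ks = x /\
       (forall ks' : seq (seq A),
          (forall k, k \in ks' -> Kset w k) -> flatten ks' = x -> ks' = ks)).
Proof.
have pcK : prefix_code (Kset w) by exact: minimal_prefix_code.
have Knil : ~ Kset w [::] by case=> /autocorr0_nonempty.
split=> //; split; first exact: star_Kset_autocorr.
move=> x /star_Kset_autocorr [ks [Kks eq_x]]; exists ks; split=> //; split=> // ks' Kks' eq_x'.
by apply: (prefix_code_unique_factorization pcK Knil Kks' Kks); rewrite eq_x eq_x'.
Qed.
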